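(* Let $(S,d)$ be a finite metric space partitioned into two disjoint groups $S=S_1\cup S_2$, let $k_1,k_2$ be nonnegative integers with $k=k_1+k_2$, and let $r^*$ be the optimal radius of the fair $k$-center problem. Suppose the points arrive in a stream in which all points of $S_1$ arrive before all points of $S_2$, and let $\Gamma_1',\Gamma_2',\Gamma_{sub}$ be the sets produced by Algorithm B (described in the context) with $\lambda=2r^*$. Then: (1) $|\Gamma_1'|+|\Gamma_2'|\le k$; (2) $|\Gamma_2'|\le k_2$; (3) there exists a subset $\Gamma_1''\subseteq\Gamma_1'$ such that every $c\in\Gamma_1''$ has a replacement $\sigma(c)\in\Gamma_{sub}$ (so $d(c,\sigma(c))\le r^*$), and, with $\Gamma'_{sub}=\{\sigma(c): c\in\Gamma_1''\}\subseteq\Gamma_{sub}$, we have $|((\Gamma_1'\setminus\Gamma_1'')\cup\Gamma'_{sub})\cap S_1|\le k_1$.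
   Context: Fair $k$-center: $C\subseteq S$ is feasible if $|C\cap S_l|\le k_l$ for $l=1,2$; cost $\max_{s\in S}d(s,C)$, $d(s,C)=\min_{c\in C}d(s,c)$, $d(s,\emptyset)=\infty$; $r^*$ is the minimum cost over feasible $C$. Algorithm B (parameter $\lambda=2r^*$): initialize $\Gamma_1'=\Gamma_2'=\Gamma_{sub}=\emptyset$. Upon each arriving $i\in S_1$: if $d(i,\Gamma_1')>\lambda$, add $i$ to $\Gamma_1'$. Upon each arriving $i\in S_2$: if $|\Gamma_1'|\le k_1$, then add $i$ to $\Gamma_2'$ iff $d(i,\Gamma_1')>3\lambda/2$ and $d(i,\Gamma_2')>\lambda$; otherwise ($|\Gamma_1'|>k_1$), add $i$ to $\Gamma_2'$ iff $d(i,\Gamma_1'\cup\Gamma_2')>\lambda$, and, in addition, if there is a point $j\in\Gamma_1'$ that has no replacement yet and satisfies $d(i,j)\le\lambda/2$, add $i$ to $\Gamma_{sub}$ and designate $i$ as the replacement $\sigma(j)$ of such a $j$. Output $\Gamma_1',\Gamma_2',\Gamma_{sub}$. *)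

From HB Require Import structures.
From mathcomp Require Import all_boot all_order all_algebra.
Set Implicit Arguments. Unset Strict Implicit. Unset Printing Implicit Defensive.
Import Order.TTheory GRing.Theory Num.Theory.
Local Open Scope ring_scope.

Section FairKCenter.
Variables (R : realFieldType) (T : finType) (d : T -> T -> R).

Definition is_metric : Prop :=
  [/\ forall x y, 0 <= d x y,
      forall x y, d x y = 0 <-> x = y,
      forall x y, d x y = d y x &
      forall x y z, d x z <= d x y + d y z].

Definition feasible (S1 S2 : {set T}) (k1 k2 : nat) (C : {set T}) : Prop :=
  (#|C :&: S1| <= k1)%N /\ (#|C :&: S2| <= k2)%N.

(* cost(C) <= r, i.e. max_s d(s,C) <= r, with d(s, emptyset) = +oo *)
Definition covers (C : {set T}) (r : R) : Prop :=
  forall s : T, exists2 c, c \in C & d s c <= r.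

Definition opt_radius (S1 S2 : {set T}) (k1 k2 : nat) (r : R) : Prop :=
  (exists2 C, feasible S1 S2 k1 k2 C & covers C r) /\
  (forall C r', feasible S1 S2 k1 k2 C -> covers C r' -> r <= r').

(* d(i, G) > lam, with d(i, emptyset) = +oo *)
Definition far (i : T) (G : {set T}) (lam : R) : Prop :=
  forall c, c \in G -> lam < d i c.

(* State of Algorithm B: Gamma_1', Gamma_2', and the list of replacement
   pairs (j, sigma(j)); Gamma_sub is the set of second components. *)
Record stateB := StateB {
  G1 : {set T};
  G2 : {set T};
  repl : seq (T * T)
}.

Definition Gsub (st : stateB) : {set T} := [set x in map snd (repl st)].

Definition has_repl (st : stateB) (j : T) : bool := j \in map fst (repl st).

(* One step of Algorithm B on arriving point i (nondeterministic in the
   choice of the point j to be replaced). *)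
Inductive stepB (S1 S2 : {set T}) (k1 : nat) (lam : R) :
    stateB -> T -> stateB -> Prop :=
| stepB_S1_add st i :
    i \in S1 -> far i (G1 st) lam ->
    stepB S1 S2 k1 lam st i (StateB (i |: G1 st) (G2 st) (repl st))
| stepB_S1_skip st i :
    i \in S1 -> ~ far i (G1 st) lam ->
    stepB S1 S2 k1 lam st i st
| stepB_S2_small_add st i :
    i \in S2 -> (#|G1 st| <= k1)%N ->
    far i (G1 st) (3 * lam / 2) -> far i (G2 st) lam ->
    stepB S1 S2 k1 lam st i (StateB (G1 st) (i |: G2 st) (repl st))
| stepB_S2_small_skip st i :
    i \in S2 -> (#|G1 st| <= k1)%N ->
    ~ (far i (G1 st) (3 * lam / 2) /\ far i (G2 st) lam) ->
    stepB S1 S2 k1 lam st i st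
| stepB_S2_large st i G2' rp' :
    i \in S2 -> (k1 < #|G1 st|)%N ->
    (far i (G1 st :|: G2 st) lam -> G2' = i |: G2 st) ->
    (~ far i (G1 st :|: G2 st) lam -> G2' = G2 st) ->
    ((exists j, [/\ j \in G1 st, ~~ has_repl st j, d i j <= lam / 2 &
                   rp' = rcons (repl st) (j, i)]) \/
     ((forall j, j \in G1 st -> ~~ has_repl st j -> lam / 2 < d i j) /\
      rp' = repl st)) ->
    stepB S1 S2 k1 lam st i (StateB (G1 st) G2' rp').

Inductive runB (S1 S2 : {set T}) (k1 : nat) (lam : R) :
    stateB -> seq T -> stateB -> Prop :=
| runB_nil st : runB S1 S2 k1 lam st [::] st
| runB_cons st i s st1 st2 :
    stepB S1 S2 k1 lam st i st1 -> runB S1 S2 k1 lam st1 s st2 ->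
    runB S1 S2 k1 lam st (i :: s) st2.

Definition initB : stateB := StateB set0 set0 [::].

End FairKCenter.

From HB Require Import structures.
From mathcomp Require Import all_boot all_order all_algebra.
From mathcomp Require Import lra zify.
Import Order.TTheory GRing.Theory Num.Theory.
Local Open Scope ring_scope.
Set Implicit Arguments. Unset Strict Implicit.

(* Write λ = 2r*.  Phase one makes Γ₁' a maximal λ-separated subset of S₁,
   so every point of S₁ is within λ of Γ₁'.  In phase two Γ₁' is frozen,
   Γ₂' stays λ-separated and farther than 3λ/2 (if |Γ₁'| ≤ k₁) or λ
   (otherwise) from Γ₁', and every replacement is a point of S₂ within
   λ/2 = r* of the point it replaces.  An optimal solution C of radius r*
   maps any 2r*-separated set injectively into C, sending each point to a
   center within r* of it.  Applied to Γ₁' ∪ Γ₂' this gives (1).  When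
   |Γ₁'| ≤ k₁, a center in S₁ serving a point of Γ₂' would put that point
   within 3r* of Γ₁', so Γ₂' maps into C ∩ S₂, giving (2); otherwise (2)
   follows from (1).  For (3) take Γ₁'' to be the replaced points.  The
   replacements lie in S₂; when |Γ₁'| > k₁, an unreplaced point of Γ₁'
   served by a center c ∈ S₂ would have been replaced by c when c arrived,
   so the unreplaced points map into C ∩ S₁. *)

Section Separation.
Variables (R : realFieldType) (T : finType) (d : T -> T -> R).
Implicit Types (A B C : {set T}) (lam r : R).
Hypotheses (d_sym : forall x y, d x y = d y x)
           (d_tri : forall x y z, d x z <= d x y + d y z).

Definition separated (lam : R) (A : {set T}) : Prop :=
  {in A &, forall x y, x != y -> lam < d x y}.

Lemma farP i A lam : reflect (far d i A lam) [forall (c | c \in A), lam < d i c].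
Proof. exact: forall_inP. Qed.

Lemma not_far i A lam : ~ far d i A lam -> exists2 c, c \in A & d i c <= lam.
Proof. by move=> /farP/forall_inPn[c cA]; rewrite -leNgt; exists c. Qed.

Lemma far_subset i A B lam : A \subset B -> far d i B lam -> far d i A lam.
Proof. by move=> /subsetP sAB iB c /sAB; apply: iB. Qed.

Lemma far_le i A lam lam' : lam <= lam' -> far d i A lam' -> far d i A lam.
Proof. by move=> le_lam iA c /iA; apply: le_lt_trans. Qed.

Lemma far_disjoint lam A B :
  (forall x, d x x = 0) -> 0 <= lam -> {in B, forall x, far d x A lam} ->
  [disjoint A & B].
Proof.
move=> d_refl lam_ge0 farBA; apply/pred0P => x /=; apply/negP => /andP[xA xB].
by have := farBA x xB x xA; rewrite d_refl ltNge lam_ge0.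
Qed.

Lemma separated_subset lam A B : A \subset B -> separated lam B -> separated lam A.
Proof. by move=> /subsetP sAB sepB x y /sAB xB /sAB; apply: sepB. Qed.

Lemma separated_setU lam A B :
  separated lam A -> separated lam B -> {in B, forall x, far d x A lam} ->
  separated lam (A :|: B).
Proof.
move=> sepA sepB farBA x y /setUP[xA|xB] /setUP[yA|yB].
- exact: sepA.
- by rewrite d_sym => _; apply: farBA.
- by move=> _; apply: farBA.
- exact: sepB.
Qed.

Lemma separated_setU1 lam i A :
  far d i A lam -> separated lam A -> separated lam (i |: A).
Proof.
move=> iA sepA; rewrite setUC; apply: separated_setU => // [x y|x].
  by move=> /set1P-> /set1P->; rewrite eqxx.
by move=> /set1P->.
Qed.

Lemma separated_card_le C r A B :
  covers d C r -> separated (2 * r) A ->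
  {in A, forall x c, c \in C -> d x c <= r -> c \in B} -> (#|A| <= #|B|)%N.
Proof.
move=> covC sepA nearB.
pose f x := odflt x [pick c in C | d x c <= r].
have fP x : f x \in C /\ d x (f x) <= r.
  rewrite /f; case: pickP => [c /andP[]//|no_c].
  by have [c cC xc] := covC x; move: (no_c c); rewrite cC xc.
have f_inj : {in A &, injective f}.
  move=> x y xA yA fxy; apply/eqP; apply: contraT => /(sepA x y xA yA).
  have [_ xf] := fP x; have [_ yf] := fP y.
  have := d_tri x (f x) y; rewrite fxy (d_sym (f y)) in xf *; lra.
rewrite -(card_in_imset f_inj); apply/subset_leq_card/subsetP => _ /imsetP[x xA ->].
by have [fC xf] := fP x; apply: (nearB x).
Qed.

End Separation.

Section AlgorithmB.
Variables (R : realFieldType) (T : finType) (d : T -> T -> R).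
Variables (S1 S2 : {set T}) (k1 : nat) (lam : R).
Hypotheses (d_refl : forall x, d x x = 0) (d_sym : forall x y, d x y = d y x)
           (d_tri : forall x y z, d x z <= d x y + d y z).
Hypotheses (lam_ge0 : 0 <= lam) (S12 : [disjoint S1 & S2]).

Local Notation step := (stepB d S1 S2 k1 lam).
Local Notation run := (runB d S1 S2 k1 lam).
Implicit Types (st : stateB T) (s : seq T).

Lemma runB_cat st s1 s2 fin :
  run st (s1 ++ s2) fin -> exists2 mid, run st s1 mid & run mid s2 fin.
Proof.
elim: s1 st => [|i s1 IH] st /=; first by exists st => //; constructor.
move=> run_is; inversion run_is as [|? ? ? ? st1 stp run1]; subst.
by have [mid run1s run2] := IH _ run1; exists mid => //; apply: runB_cons stp run1s.
Qed.

Lemma stepB_has_repl st i st1 j : step st i st1 -> has_repl st j -> has_repl st1 j.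
Proof.
case=> // {}st {}i G2' rp' _ _ _ _ [[j' [_ _ _ ->]]|[_ ->]] //.
by rewrite /has_repl /= map_rcons mem_rcons in_cons => ->; rewrite orbT.
Qed.

Lemma runB_has_repl st s fin j : run st s fin -> has_repl st j -> has_repl fin j.
Proof. by elim=> // {}st i {}s st1 {}fin /stepB_has_repl; auto. Qed.

Lemma stepB_S1 st i st1 : step st i st1 -> i \in S1 ->
  [/\ G2 st1 = G2 st, repl st1 = repl st, G1 st \subset G1 st1,
      separated d lam (G1 st) -> separated d lam (G1 st1) &
      exists2 j, j \in G1 st1 & d i j <= lam].
Proof.
move=> stp /(disjointFr S12) iS2.
case: stp iS2 => {st i st1} [st i iS|st i iS|st i iS|st i iS|st i ? ? iS];
  rewrite ?iS //.
- move=> i_far _; split=> //=; first exact: subsetUr.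
    exact: separated_setU1.
  by exists i; rewrite ?setU11 ?d_refl.
- by move=> /not_far[j jG ij] _; split=> //; exists j.
Qed.

Lemma runB_S1 st s fin : run st s fin -> {subset s <= S1} ->
  [/\ G2 fin = G2 st, repl fin = repl st, G1 st \subset G1 fin,
      separated d lam (G1 st) -> separated d lam (G1 fin) &
      {in s, forall x, exists2 j, j \in G1 fin & d x j <= lam}].
Proof.
elim=> [{}st|{}st i {}s st1 {}fin stp _ IH] sS1; first by split => // x.
have [e2 er sub sep [j jG ij]] := stepB_S1 stp (sS1 i (mem_head _ _)).
have [e2' er' sub' sep' near] := IH (fun x xs => sS1 x (mem_behead (s := i :: s) xs)).
split; [by rewrite e2' | by rewrite er' | exact: subset_trans sub' | by auto |].
move=> x; rewrite in_cons => /predU1P[->|]; last exact: near.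
by exists j => //; apply: (subsetP sub').
Qed.

Definition gap (G : {set T}) : R := if (#|G| <= k1)%N then 3 * lam / 2 else lam.

Lemma gap_ge G : lam <= gap G.
Proof. by move: lam_ge0; rewrite /gap; case: ifP => _; lra. Qed.

Definition replacement_pair (G : {set T}) (p : T * T) : Prop :=
  [/\ p.1 \in G, d p.2 p.1 <= lam / 2 & p.2 \in S2].

Definition phase2_inv st : Prop :=
  [/\ {in repl st, forall p, replacement_pair (G1 st) p},
      separated d lam (G2 st) &
      {in G2 st, forall x, far d x (G1 st) (gap (G1 st))}].

Lemma stepB_S2_G1 st i st1 : step st i st1 -> i \in S2 -> G1 st1 = G1 st.
Proof. by case=> // {}st {}i iS1 _ /(disjointFl S12); rewrite iS1. Qed.

Lemma stepB_S2_inv st i st1 :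
  step st i st1 -> i \in S2 -> phase2_inv st -> phase2_inv st1.
Proof.
move=> stp /(disjointFl S12) iS1.
case: stp iS1 => {st i st1} [st i iS|st i iS|st i iS|st i iS|st i G2' rp' iS];
  rewrite ?iS //.
- move=> small far1 far2 _ [pairs sep farG].
  split=> //=; first exact: separated_setU1.
  by move=> x /setU1P[->|/farG]; rewrite /gap small.
- move=> large add keep choice _ [pairs sep farG].
  have pairs' : {in rp', forall p, replacement_pair (G1 st) p}.
    case: choice => [[j [jG _ ij ->]]|[_ ->]] // p.
    by rewrite mem_rcons in_cons => /predU1P[->|/pairs].
  case: (farP d i (G1 st :|: G2 st) lam) => [i_far|/keep->]; last by split.
  rewrite {}add //; split=> //=.
    by apply: separated_setU1 => //; apply: far_subset i_far; apply: subsetUr.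
  move=> x /setU1P[->|/farG //]; rewrite /gap leqNgt large.
  by apply: far_subset i_far; apply: subsetUl.
Qed.

Lemma stepB_S2_replaces st i st1 j :
  step st i st1 -> i \in S2 -> (k1 < #|G1 st|)%N -> separated d lam (G1 st) ->
  j \in G1 st -> d i j <= lam / 2 -> has_repl st1 j.
Proof.
move=> stp iS2 large sepG jG ij.
have [/(stepB_has_repl stp)//|fresh] := boolP (has_repl st j).
case: stp iS2 large sepG jG ij fresh => {st i st1}
  [st i iS|st i iS|st i iS|st i iS|st i G2' rp' iS].
- by rewrite (disjointFr S12 iS).
- by rewrite (disjointFr S12 iS).
- by move=> small _ _ _; rewrite ltnNge small.
- by move=> small _ _; rewrite ltnNge small.
move=> _ _ _ choice _ _ sepG jG ij fresh.
case: choice => [[j' [j'G _ ij' ->]]|[none _]]; last first.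
  by have := none j jG fresh; rewrite ltNge ij.
suff -> : j = j' by rewrite /has_repl /= map_rcons mem_rcons mem_head.
apply/eqP; apply: contraTT (d_tri j i j') => /(sepG j j' jG j'G) far_jj'.
by rewrite -ltNge (d_sym j i); lra.
Qed.

Lemma runB_S2 st s fin : run st s fin -> {subset s <= S2} -> phase2_inv st ->
  [/\ G1 fin = G1 st, phase2_inv fin &
      (k1 < #|G1 st|)%N -> separated d lam (G1 st) ->
      {in s, forall x j, j \in G1 st -> d x j <= lam / 2 -> has_repl fin j}].
Proof.
elim=> [{}st|{}st i {}s st1 {}fin stp run1 IH] sS2 inv; first by split=> // _ _ x.
have iS2 := sS2 i (mem_head _ _).
have eG1 := stepB_S2_G1 stp iS2.
have [eG1' inv' repl'] := IH (fun x xs => sS2 x (mem_behead (s := i :: s) xs))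
                              (stepB_S2_inv stp iS2 inv).
split=> [|//|large sepG x]; first by rewrite eG1' eG1.
rewrite in_cons => /predU1P[->|xs] j jG xj.
  by apply: runB_has_repl run1 _; apply: stepB_S2_replaces stp iS2 large sepG jG xj.
by rewrite eG1 in repl'; apply: repl' large sepG x xs j jG xj.
Qed.

End AlgorithmB.

Lemma mem_phases (T : finType) (S1 S2 : {set T}) (s1 s2 : seq T) :
  [disjoint S1 & S2] -> (forall x, x \in s1 ++ s2) ->
  {subset s1 <= S1} -> {subset s2 <= S2} -> {subset S1 <= s1} /\ {subset S2 <= s2}.
Proof.
move=> S12 s_all s1S1 s2S2.
split=> x xS; move: (s_all x); rewrite mem_cat => /orP[xs|xs] //.
  by move: (s2S2 x xs); rewrite (disjointFr S12 xS).
by move: (s1S1 x xs); rewrite (disjointFl S12 xS).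
Qed.

Section Replacements.
Variable T : finType.
Implicit Types (st : stateB T) (c : T).

Definition replaced st : {set T} := [set j in G1 st | has_repl st j].

Definition replacement st c : T := odflt c [pick y | (c, y) \in repl st].

Lemma replacementP st c : has_repl st c -> (c, replacement st c) \in repl st.
Proof.
rewrite /replacement; case: pickP => [y //|none] /mapP[[c' y] cy /= ec].
by have := none y; rewrite ec cy.
Qed.

End Replacements.

Lemma opt_radius_ge0 (R : realFieldType) (T : finType) (d : T -> T -> R)
    S1 S2 k1 k2 (r : R) :
  (forall x y, 0 <= d x y) -> opt_radius d S1 S2 k1 k2 r -> 0 <= r.
Proof.
move=> d_ge0 [[C feasC covC] r_min].
case: (pickP (@predT T)) => [x _|noT].
  by have [c _ xc] := covC x; apply: le_trans xc.
have covC' : covers d C (r - 1) by move=> x; have := noT x.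
by have := r_min _ _ feasC covC'; lra.
Qed.

Section Analysis.
Variables (R : realFieldType) (T : finType) (d : T -> T -> R).
Variables (S1 S2 : {set T}) (k1 k2 : nat) (r : R) (C : {set T}).
Hypotheses (d_refl : forall x, d x x = 0) (d_sym : forall x y, d x y = d y x)
           (d_tri : forall x y z, d x z <= d x y + d y z).
Hypotheses (r_ge0 : 0 <= r) (S12 : [disjoint S1 & S2]) (S1US2 : S1 :|: S2 = [set: T]).
Hypotheses (feasC : feasible S1 S2 k1 k2 C) (covC : covers d C r).

Let lam_ge0 : 0 <= 2 * r := mulr_ge0 (ler0n _ 2) r_ge0.
Local Notation inv := (phase2_inv d S2 k1 (2 * r)).
Implicit Types (st : stateB T).

Lemma card_centers_le : (#|C| <= k1 + k2)%N.
Proof.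
case: feasC => C1 C2; rewrite -(setIT C) -S1US2 setIUr.
by apply: leq_trans (leq_card_setU _ _) _; apply: leq_add.
Qed.

Lemma card_G1_G2_le st :
  separated d (2 * r) (G1 st) -> inv st -> (#|G1 st| + #|G2 st| <= k1 + k2)%N.
Proof.
move=> sepG [_ sep2 far2].
have far2' : {in G2 st, forall x, far d x (G1 st) (2 * r)}.
  by move=> x /far2; apply: far_le; apply: gap_ge.
have /disjoint_setI0 disj : [disjoint G1 st & G2 st].
  exact: far_disjoint far2'.
have sepU := separated_setU d_sym sepG sep2 far2'.
have := separated_card_le d_sym d_tri covC sepU (B := C) (fun _ _ c cC _ => cC).
by rewrite cardsU disj cards0 subn0 => /leq_trans; apply; apply: card_centers_le.
Qed.

Lemma card_G2_le st :
  separated d (2 * r) (G1 st) -> inv st ->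
  {in S1, forall x, exists2 j, j \in G1 st & d x j <= 2 * r} -> (#|G2 st| <= k2)%N.
Proof.
move=> sepG invst nearG; case: (leqP #|G1 st| k1) => [small|large]; last first.
  by have := card_G1_G2_le sepG invst; lia.
case: invst => _ sep2 far2; apply: leq_trans feasC.2.
apply: (separated_card_le d_sym d_tri covC sep2) => x xG2 c cC xc; rewrite inE cC /=.
have /setUP[cS1|//] : c \in S1 :|: S2 by rewrite S1US2 inE.
have [j jG cj] := nearG c cS1.
have := far2 x xG2 j jG; rewrite /gap small => far_xj.
by exfalso; have := d_tri x c j; lra.
Qed.

Lemma card_kept_S1_le st :
  separated d (2 * r) (G1 st) -> inv st ->
  ((k1 < #|G1 st|)%N ->
     {in S2, forall x j, j \in G1 st -> d x j <= r -> has_repl st j}) ->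
  (#|((G1 st :\: replaced st) :|: [set replacement st c | c in replaced st]) :&: S1|
     <= k1)%N.
Proof.
move=> sepG [pairs _ _] replG.
set kept := G1 st :\: replaced st.
set subs := [set replacement st c | c in replaced st].
have sub_kept : (kept :|: subs) :&: S1 \subset kept.
  apply/subsetP => x /setIP[/setUP[//|/imsetP[c /setIdP[_ /replacementP cr] ->]] xS1].
  by have [_ _] := pairs _ cr; rewrite /= (disjointFr S12 xS1).
apply: leq_trans (subset_leq_card sub_kept) _.
case: (leqP #|G1 st| k1) => [small|/replG replG'].
  by apply: leq_trans small; apply/subset_leq_card/subsetDl.
apply: leq_trans feasC.1.
apply: (separated_card_le d_sym d_tri covC (separated_subset (subsetDl _ _) sepG)).
move=> x /setDP[xG xkept] c cC xc; rewrite inE cC /=.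
have /setUP[//|cS2] : c \in S1 :|: S2 by rewrite S1US2 inE.
by rewrite d_sym in xc; move: xkept; rewrite inE xG (replG' c cS2 x xG xc).
Qed.

End Analysis.

Theorem lemma5 (R : realFieldType) (T : finType) (d : T -> T -> R)
    (S1 S2 : {set T}) (k1 k2 : nat) (rstar : R)
    (s s1 s2 : seq T) (fin : stateB T) :
  is_metric d ->
  [disjoint S1 & S2] -> S1 :|: S2 = [set: T] ->
  opt_radius d S1 S2 k1 k2 rstar ->
  (* the stream: every point exactly once, all of S1 before all of S2 *)
  uniq s -> (forall x, x \in s) ->
  s = s1 ++ s2 -> all (fun x => x \in S1) s1 -> all (fun x => x \in S2) s2 ->
  runB d S1 S2 k1 (2 * rstar) (initB T) s fin ->
  [/\ (#|G1 fin| + #|G2 fin| <= k1 + k2)%N,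
      (#|G2 fin| <= k2)%N &
      exists (G1'' : {set T}) (sigma : T -> T),
        [/\ G1'' \subset G1 fin,
            forall c, c \in G1'' ->
              (c, sigma c) \in repl fin /\ d c (sigma c) <= rstar &
            (#|((G1 fin :\: G1'') :|: [set sigma c | c in G1'']) :&: S1|
               <= k1)%N]].
Proof.
move=> [d_ge0 d_eq d_sym d_tri] S12 S1US2 opt _ s_all s_cat /allP s1S1 /allP s2S2.
subst s => /runB_cat[mid run1 run2].
have d_refl x : d x x = 0 by apply/d_eq.
have r_ge0 := opt_radius_ge0 d_ge0 opt.
have lam_ge0 : 0 <= 2 * rstar by lra.
have [[C feasC covC] _] := opt.
have [in_s1 in_s2] := mem_phases S12 s_all s1S1 s2S2.
have [G2_mid repl_mid _ sep_mid near_mid] := runB_S1 d_refl d_sym lam_ge0 S12 run1 s1S1.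
have inv_mid : phase2_inv d S2 k1 (2 * rstar) mid.
  by split; rewrite ?repl_mid ?G2_mid // => x; rewrite inE.
have [G1_fin inv_fin repl_fin] := runB_S2 d_sym d_tri S12 run2 s2S2 inv_mid.
have sepG : separated d (2 * rstar) (G1 fin).
  by rewrite G1_fin; apply: sep_mid => x; rewrite inE.
rewrite -G1_fin in near_mid repl_fin.
split.
- exact: (card_G1_G2_le d_refl d_sym d_tri r_ge0 S1US2 feasC covC sepG inv_fin).
- apply: (card_G2_le d_refl d_sym d_tri r_ge0 S12 S1US2 feasC covC sepG inv_fin).
  by move=> x /in_s1; apply: near_mid.
exists (replaced fin), (replacement fin); split.
- by rewrite /replaced setIdE subsetIl.
- move=> c /setIdP[_ /replacementP cr]; split=> //.
  have [pairs _ _] := inv_fin; have [_ + _] := pairs _ cr.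
  by rewrite d_sym; lra.
apply: (card_kept_S1_le d_sym d_tri S12 S1US2 feasC covC sepG inv_fin).
move=> large x /in_s2 xs j jG xj; apply: (repl_fin large sepG x xs j jG); lra.
Qed.
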